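(* Every stag hunt is weakly acyclic; that is, every weakly maximal state of a stag hunt is a pure Nash equilibrium. Equivalently, from every profile of a stag hunt there is a finite sequence of strictly profitable unilateral deviations ending at a pure Nash equilibrium.
   Context: A stag hunt is a game with players $I=\{1,\dots,n\}$, each with strategy set $S_i=\{A,D\}$, given by a constant $c\in\mathbb{R}$ and, for each $i$, a function $f_i$ defined on subsets $T\subseteq I$ with $i\in T$ that is strictly increasing with respect to inclusion ($T\subsetneq T'$ implies $f_i(T)<f_i(T')$). For a profile $s$ let $T(s)=\{j: s_j=A\}$; the payoffs are $u_i(s)=f_i(T(s))$ if $s_i=A$ and $u_i(s)=c$ if $s_i=D$. Moreover $f_i(I)>c$ for all $i$ (so everyone prefers the all-$A$ profile $A^n$) and $f_i(\{i\})<c$ for all $i$ (unilateral deviations from the all-$D$ profile $D^n$ are harmful). For a profile $s$ and $s_i'$, $(s_i',s_{-i})$ denotes $s$ with player $i$'s strategy replaced. A pure Nash equilibrium is $s$ with $u_i(s)\ge u_i(s_i',s_{-i})$ for all $i,s_i'$. The strict deployment graph has vertex set the profiles and an arc $(s,s')$ iff $s'=(s_i',s_{-i})$ for some $i$ with $u_i(s')>u_i(s)$. Define $s\succeq s'$ iff there is a directed path (possibly of length $0$) in this graph from $s'$ to $s$, and $s\succ s'$ iff $s\succeq s'$ and not $s'\succeq s$. A weakly maximal state is an $s^*$ with no $s$ satisfying $s\succ s^*$. A game is weakly acyclic if all its weakly maximal states are pure Nash equilibria. *)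

From HB Require Import structures.
From mathcomp Require Import all_boot all_order all_algebra.
From Stdlib Require Import Relations.
Set Implicit Arguments. Unset Strict Implicit. Unset Printing Implicit Defensive.
Import Order.TTheory GRing.Theory Num.Theory.
Local Open Scope ring_scope.

(* Strategies: A (stag / cooperate) and D (hare / defect). *)
Inductive strat := A | D.

Definition isA (a : strat) : bool := if a is A then true else false.

Definition profile (n : nat) := 'I_n -> strat.

Definition upd (n : nat) (s : profile n) (i : 'I_n) (a : strat) : profile n :=
  fun j => if j == i then a else s j.

Definition Tset (n : nat) (s : profile n) : {set 'I_n} := [set j | isA (s j)].

Definition payoff (R : realFieldType) (n : nat) (c : R)
  (f : 'I_n -> {set 'I_n} -> R) (i : 'I_n) (s : profile n) : R :=
  if s i is A then f i (Tset s) else c.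

(* Stag hunt hypotheses on (c, f).  f i is only meaningful on sets containing i. *)
Definition is_stag_hunt (R : realFieldType) (n : nat) (c : R)
  (f : 'I_n -> {set 'I_n} -> R) : Prop :=
  [/\ (forall i (T T' : {set 'I_n}), i \in T -> T \proper T' -> f i T < f i T'),
      (forall i, c < f i [set: 'I_n]) &
      (forall i, f i [set i] < c)].

Section Game.
Variables (R : realFieldType) (n : nat) (u : 'I_n -> profile n -> R).

Definition pure_nash (s : profile n) : Prop :=
  forall i a, u i (upd s i a) <= u i s.

Definition arc (s s' : profile n) : Prop :=
  exists i a, s' = upd s i a /\ u i s < u i s'.

Definition succeq (s s' : profile n) : Prop := clos_refl_trans _ arc s' s.

Definition succ (s s' : profile n) : Prop := succeq s s' /\ ~ succeq s' s.

Definition weakly_maximal (s : profile n) : Prop := ~ exists s', succ s' s.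

Definition weakly_acyclic : Prop :=
  forall s, weakly_maximal s -> pure_nash s.
End Game.

(* Two phases of improving deviations reach an equilibrium.  First, while some
   A-player earns less than c, let it switch to D; this shrinks the set T of
   A-players.  Once every A-player earns at least c, the only profitable
   deviations are D-players switching to A, and by monotonicity of f such a
   switch keeps every A-player at or above c while enlarging T; so this phase
   also terminates, necessarily at a pure Nash equilibrium.  Finally, a
   profile reaching an equilibrium t can only be weakly maximal if t also
   reaches it back, and nothing leaves an equilibrium, so the profile is t. *)
From Pilot Require Import Defs.
From mathcomp Require Import all_boot all_order all_algebra.
From mathcomp Require Import zify.
From Stdlib Require Import Relations Classical.
Set Implicit Arguments. Unset Strict Implicit. Unset Printing Implicit Defensive.
Import Order.TTheory GRing.Theory Num.Theory.
Local Open Scope ring_scope.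

Section Deployment.
Variables (R : realFieldType) (n : nat) (u : 'I_n -> profile n -> R).

Lemma succeq_arc (s s' t : profile n) :
  Defs.arc u s s' -> succeq u t s' -> succeq u t s.
Proof. by move=> hss' hts'; apply: rt_trans hts'; apply: rt_step. Qed.

Lemma succeq_nash (s t : profile n) : pure_nash u t -> succeq u s t -> s = t.
Proof.
move=> hN /clos_rt_rt1n_iff; case=> [//|y z [i [a [-> hlt]]] _].
by move: (hN i a); rewrite leNgt hlt.
Qed.

Lemma weakly_acyclicP :
  (forall s, exists2 t, succeq u t s & pure_nash u t) -> weakly_acyclic u.
Proof.
move=> hreach s hmax; have [t hts hN] := hreach s.
have hst : succeq u s t by apply: NNPP => hst; apply: hmax; exists t.
by rewrite (succeq_nash hN hst).
Qed.

End Deployment.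

Lemma Tset_updA (n : nat) (s : profile n) i : Tset (upd s i A) = i |: Tset s.
Proof. by apply/setP => j; rewrite !inE /upd; case: eqP. Qed.

Lemma Tset_updD (n : nat) (s : profile n) i : Tset (upd s i D) = Tset s :\ i.
Proof. by apply/setP => j; rewrite !inE /upd; case: eqP. Qed.

Lemma in_Tset (n : nat) (s : profile n) i : (i \in Tset s) = isA (s i).
Proof. by rewrite inE. Qed.

Lemma card_set_ord_le (n : nat) (T : {set 'I_n}) : (#|T| <= n)%N.
Proof. by rewrite -[X in (_ <= X)%N](card_ord n) max_card. Qed.

Section StagHunt.
Variables (R : realFieldType) (n : nat) (c : R) (f : 'I_n -> {set 'I_n} -> R).
Hypothesis f_mono :
  forall i (T T' : {set 'I_n}), i \in T -> T \proper T' -> f i T < f i T'.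

Local Notation u := (payoff c f).

Lemma payoff_upd (s : profile n) i a :
  u i (upd s i a) = if a is A then f i (i |: Tset s) else c.
Proof. by rewrite /payoff /upd eqxx; case: a; rewrite -/(upd s i A) ?Tset_updA. Qed.

Lemma arc_upd (s : profile n) i a : u i s < u i (upd s i a) -> Defs.arc u s (upd s i a).
Proof. by exists i, a. Qed.

Definition cooperators_content (s : profile n) :=
  forall i, s i = A -> c <= f i (Tset s).

Lemma nash_of_content (s : profile n) :
  cooperators_content s -> (forall i, s i = D -> f i (i |: Tset s) <= c) ->
  pure_nash u s.
Proof.
move=> hA hD i a; rewrite payoff_upd /payoff.
case hs: (s i); case: a => //; last exact: hD.
- by rewrite (setUidPr _) // sub1set in_Tset hs.
- exact: hA.
Qed.

Lemma content_join (s : profile n) i :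
  cooperators_content s -> s i = D -> c <= f i (i |: Tset s) ->
  cooperators_content (upd s i A).
Proof.
move=> hA hs hi j; rewrite Tset_updA /upd; case: eqP => [-> //|_ hsj].
apply/ltW/(le_lt_trans (hA j hsj))/f_mono; first by rewrite in_Tset hsj.
by rewrite properUr // sub1set in_Tset hs.
Qed.

Lemma reach_content (s : profile n) :
  exists2 t, succeq u t s & cooperators_content t.
Proof.
have [k] := ubnP #|Tset s|; elim: k s => // k IH s hk.
case: (boolP [exists i, isA (s i) && (f i (Tset s) < c)]).
- case/existsP=> i /andP[]; rewrite -in_Tset => hi hlt.
  have [|t hts ht] := IH (upd s i D).
    by move: hk; rewrite Tset_updD (cardsD1 i (Tset s)) hi add1n ltnS.
  exists t => //; apply: succeq_arc hts; apply: arc_upd.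
  by rewrite payoff_upd /payoff; move: hi; rewrite in_Tset; case: (s i).
- move=> hnone; exists s; first exact: rt_refl.
  move=> i hs; rewrite leNgt; apply: (contraNN _ hnone) => hlt.
  by apply/existsP; exists i; rewrite hs.
Qed.

Lemma reach_nash_of_content (s : profile n) : cooperators_content s ->
  exists2 t, succeq u t s & pure_nash u t.
Proof.
have [k] := ubnP (n - #|Tset s|); elim: k s => // k IH s hk hA.
case: (boolP [exists i, ~~ isA (s i) && (c < f i (i |: Tset s))]).
- case/existsP=> i /andP[]; rewrite -in_Tset => hi hlt.
  have hs : s i = D by move: hi; rewrite in_Tset; case: (s i).
  have [||t hts ht] := IH (upd s i A).
  + move: hk (card_set_ord_le (i |: Tset s)).
    by rewrite Tset_updA cardsU1 hi; lia.
  + exact: content_join (ltW hlt).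
  exists t => //; apply: succeq_arc hts; apply: arc_upd.
  by rewrite payoff_upd /payoff hs.
- move=> hnone; exists s; first exact: rt_refl.
  apply: nash_of_content => // i hs; rewrite leNgt.
  by apply: (contraNN _ hnone) => hlt; apply/existsP; exists i; rewrite hs.
Qed.

End StagHunt.

Theorem theorem4 (R : realFieldType) (n : nat) (c : R)
  (f : 'I_n -> {set 'I_n} -> R) :
  is_stag_hunt c f -> weakly_acyclic (payoff c f).
Proof.
case=> f_mono _ _; apply: weakly_acyclicP => s.
have [t hts /(reach_nash_of_content f_mono) [v hvt hv]] := reach_content c f s.
by exists v => //; exact: rt_trans hts hvt.
Qed.
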